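(* Let $(H,\theta)$ be a strengthened arity, and let $T$ be the (least) fixed point, i.e. the initial algebra, of the endofunctor $F:=I+H$ of $\mathrm{End}^\omega({\mathsf{Set}})$, $X\mapsto I+H(X)$. Then $T$ is $\omega$-cocontinuous and comes equipped with a structure of monad together with a representation of the arity $\tilde H$, and $T$ with this structure is an initial object of the category of $\tilde H$-representations.
   Context: Conventions: for endofunctors $F,G$ of ${\mathsf{Set}}$, $F\cdot G$ denotes $F\circ G$; whiskering is written $F\alpha$, $\alpha F$; $I$ is the identity functor. An endofunctor is $\omega$-cocontinuous if it preserves colimits of $\omega$-chains; $\mathrm{End}^\omega({\mathsf{Set}})$ is the category of such endofunctors. $\mathrm{End}^\omega_*({\mathsf{Set}})$ is the category of pointed $\omega$-cocontinuous endofunctors $(F,e)$, $e\colon I\to F$; pointed endofunctors compose as $(Z_1\cdot Z_2,e_1\cdot e_2)$ with horizontal composite. A strengthened arity is a pair $(H,\theta)$ where $H$ is an $\omega$-cocontinuous endofunctor of $\mathrm{End}^\omega({\mathsf{Set}})$ and $\theta$ is a natural transformation with components $\theta_{X,(Z,e)}\colon H(X)\cdot Z\to H(X\cdot Z)$, natural in $X$ and $(Z,e)$, such that $\theta_{X,(I,1_I)}=1_{H(X)}$ and $\theta_{X,(Z_1\cdot Z_2,e_1\cdot e_2)}=\theta_{X\cdot Z_1,(Z_2,e_2)}\circ(\theta_{X,(Z_1,e_1)}Z_2)$. Modules: for a monad $R=(R,\mu,\eta)$ on ${\mathsf{Set}}$, an $R$-module is a functor $M\colon{\mathsf{Set}}\to{\mathsf{Set}}$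 with $\rho^M\colon M\cdot R\to M$ satisfying $\rho^M\circ\rho^MR=\rho^M\circ M\mu$, $\rho^M\circ M\eta=1_M$; module morphisms are natural transformations commuting with actions. $R$ is an $R$-module via $\mu$. For a monad morphism $f\colon R\to S$ and $S$-module $N$, $f^*N$ is $N$ with $R$-action $\rho^N\circ Nf$; $f$ itself is an $R$-module morphism $R\to f^*S$. The arity $\tilde H$ associated to $(H,\theta)$: for an $\omega$-cocontinuous monad $R$, $\tilde H(R)$ is the $R$-module $H(R)$ with action $H(\mu)\circ\theta_{R,(R,\eta)}\colon H(R)\cdot R\to H(R)$; for a monad morphism $f\colon R\to S$, $\tilde H(f)$ is $H(f)\colon H(R)\to f^*H(S)$, a morphism of $R$-modules. An $\tilde H$-representation is a pair $(R,r)$ with $R$ a monad on ${\mathsf{Set}}$ with $\omega$-cocontinuous underlying functor and $r\colon\tilde H(R)\to R$ a morphism of $R$-modules. A morphism $(R,r)\to(S,s)$ is a monad morphism $m\colon R\to S$ with $m\circ r=s\circ H(m)$ (as morphisms of $R$-modules $H(R)\to m^*S$). *)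

(* Set := Rocq's Type (universe-level sets).
   Endofunctors of Set are represented by their data (object map and
   morphism map); the functor laws, naturality, omega-cocontinuity etc.
   are separate predicates.  Primitive projections give definitional
   record eta, so that X . I, I . X and X reduce to the same functor and
   composition is strictly associative (as in the paper). *)
Set Implicit Arguments.
Unset Strict Implicit.
Set Primitive Projections.

Record Functor := MkFunctor {
  fobj :> Type -> Type;
  fmap : forall A B : Type, (A -> B) -> fobj A -> fobj B }.
Arguments fmap f {A B} _ _.
Arguments MkFunctor : clear implicits.

Definition is_functor (F : Functor) : Prop :=
  (forall (A : Type) (x : F A), fmap F (fun y : A => y) x = x) /\
  (forall (A B C : Type) (f : A -> B) (g : B -> C) (x : F A),
      fmap F (fun y => g (f y)) x = fmap F g (fmap F f x)).

Definition IdF : Functor := MkFunctor (fun A => A) (fun A B f => f).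
Definition comp (F G : Functor) : Functor :=
  MkFunctor (fun A => F (G A)) (fun A B f => fmap F (fmap G f)).
Definition SumF (F G : Functor) : Functor :=
  MkFunctor (fun A => (F A + G A)%type)
    (fun A B f x => match x with
                    | inl y => inl (fmap F f y)
                    | inr z => inr (fmap G f z) end).

Definition Nt (F G : Functor) := forall A : Type, F A -> G A.
Definition natural (F G : Functor) (a : Nt F G) : Prop :=
  forall (A B : Type) (f : A -> B) (x : F A), a B (fmap F f x) = fmap G f (a A x).
Definition neq (F G : Functor) (a b : Nt F G) : Prop :=
  forall (A : Type) (x : F A), a A x = b A x.

Definition idn (F : Functor) : Nt F F := fun A x => x.
Arguments idn : clear implicits.
Definition vcomp (F G K : Functor) (b : Nt G K) (a : Nt F G) : Nt F K :=
  fun A x => b A (a A x).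
Definition hcomp (F F' G G' : Functor) (a : Nt F F') (f : Nt G G')
  : Nt (comp F G) (comp F' G') := fun A x => fmap F' (f A) (a (G A) x).
Definition whiskerR (F G : Functor) (a : Nt F G) (Z : Functor)
  : Nt (comp F Z) (comp G Z) := fun A => a (Z A).
Arguments whiskerR {F G} a Z.
Definition sum_nat (F G G' : Functor) (h : Nt G G')
  : Nt (SumF F G) (SumF F G') :=
  fun A x => match x with inl y => inl y | inr z => inr (h A z) end.

Arguments sum_nat F {G G'} h.
Definition is_colim_set (A : nat -> Type) (a : forall n, A n -> A (S n))
  (C : Type) (c : forall n, A n -> C) : Prop :=
  (forall n x, c (S n) (a n x) = c n x) /\
  forall (D : Type) (d : forall n, A n -> D),
    (forall n x, d (S n) (a n x) = d n x) ->
    exists u : C -> D, (forall n x, u (c n x) = d n x) /\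
      forall v : C -> D, (forall n x, v (c n x) = d n x) -> forall y, v y = u y.

Definition omega_cocont (F : Functor) : Prop :=
  forall (A : nat -> Type) (a : forall n, A n -> A (S n)) (C : Type)
         (c : forall n, A n -> C),
    is_colim_set a c ->
    is_colim_set (A := fun n => F (A n)) (fun n => fmap F (a n)) (fun n => fmap F (c n)).

(* objects of End^omega(Set) *)
Definition ocf (F : Functor) : Prop := is_functor F /\ omega_cocont F.

Definition is_colim_end (X : nat -> Functor) (x : forall n, Nt (X n) (X (S n)))
  (L : Functor) (l : forall n, Nt (X n) L) : Prop :=
  ocf L /\ (forall n, natural (l n)) /\
  (forall n, neq (vcomp (l (S n)) (x n)) (l n)) /\
  forall (D : Functor) (d : forall n, Nt (X n) D),
    ocf D -> (forall n, natural (d n)) ->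
    (forall n, neq (vcomp (d (S n)) (x n)) (d n)) ->
    exists u : Nt L D, natural u /\ (forall n, neq (vcomp u (l n)) (d n)) /\
      forall v : Nt L D, natural v -> (forall n, neq (vcomp v (l n)) (d n)) ->
        neq v u.

(* Data of a (would-be) strengthened arity.  H is given on all functors,
   but all axioms only constrain its restriction to End^omega(Set). *)
Record ArityData := MkArityData {
  Hobj :> Functor -> Functor;
  Hmor : forall X Y : Functor, Nt X Y -> Nt (Hobj X) (Hobj Y);
  Hth  : forall X Z : Functor, Nt IdF Z -> Nt (comp (Hobj X) Z) (Hobj (comp X Z)) }.
Arguments Hmor _ {X Y} _ : rename.
Arguments Hth _ X {Z} _ : rename.

Definition strengthened_arity (H : ArityData) : Prop :=
  (forall X, ocf X -> ocf (H X)) /\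
  (forall X Y (a : Nt X Y), ocf X -> ocf Y -> natural a -> natural (Hmor H a)) /\
  (forall X, ocf X -> neq (Hmor H (idn X)) (idn (H X))) /\
  (forall X Y K (a : Nt X Y) (b : Nt Y K), ocf X -> ocf Y -> ocf K ->
     natural a -> natural b ->
     neq (Hmor H (vcomp b a)) (vcomp (Hmor H b) (Hmor H a))) /\
  (forall (X : nat -> Functor) (x : forall n, Nt (X n) (X (S n)))
          (L : Functor) (l : forall n, Nt (X n) L),
     (forall n, ocf (X n)) -> (forall n, natural (x n)) ->
     is_colim_end x l ->
     is_colim_end (X := fun n => H (X n)) (fun n => Hmor H (x n))
                  (fun n => Hmor H (l n))) /\
  (forall X Z (e : Nt IdF Z), ocf X -> ocf Z -> natural e ->
     natural (Hth H X e)) /\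
  (forall X X' Z Z' (e : Nt IdF Z) (e' : Nt IdF Z') (a : Nt X X') (f : Nt Z Z'),
     ocf X -> ocf X' -> ocf Z -> ocf Z' -> natural e -> natural e' ->
     natural a -> natural f -> neq (vcomp f e) e' ->
     neq (vcomp (Hth H X' e') (hcomp (Hmor H a) f))
         (vcomp (Hmor H (hcomp a f)) (Hth H X e))) /\
  (forall X, ocf X -> neq (Hth H X (idn IdF)) (idn (H X))) /\
  (forall X Z1 Z2 (e1 : Nt IdF Z1) (e2 : Nt IdF Z2),
     ocf X -> ocf Z1 -> ocf Z2 -> natural e1 -> natural e2 ->
     neq (Hth H X (hcomp e1 e2))
         (vcomp (Hth H (comp X Z1) e2) (whiskerR (Hth H X e1) Z2))).

Definition initial_algebra (H : ArityData) (T : Functor)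
  (alpha : Nt (SumF IdF (H T)) T) : Prop :=
  ocf T /\ natural alpha /\
  forall (X : Functor) (beta : Nt (SumF IdF (H X)) X),
    ocf X -> natural beta ->
    exists h : Nt T X, natural h /\
      neq (vcomp h alpha) (vcomp beta (sum_nat IdF (Hmor H h))) /\
      forall h' : Nt T X, natural h' ->
        neq (vcomp h' alpha) (vcomp beta (sum_nat IdF (Hmor H h'))) -> neq h' h.
Arguments initial_algebra : clear implicits.

Definition is_monad (R : Functor) (eta : Nt IdF R) (mu : Nt (comp R R) R) : Prop :=
  is_functor R /\ natural eta /\ natural mu /\
  (forall A (x : R A), mu A (eta (R A) x) = x) /\
  (forall A (x : R A), mu A (fmap R (eta A) x) = x) /\
  (forall A (x : R (R (R A))), mu A (mu (R A) x) = mu A (fmap R (mu A) x)).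

Definition monad_morphism (R S : Functor) (etaR : Nt IdF R) (muR : Nt (comp R R) R)
  (etaS : Nt IdF S) (muS : Nt (comp S S) S) (m : Nt R S) : Prop :=
  natural m /\ neq (vcomp m etaR) etaS /\
  neq (vcomp m muR) (vcomp muS (hcomp m m)).

Definition tildeH_action (H : ArityData) (R : Functor) (eta : Nt IdF R)
  (mu : Nt (comp R R) R) : Nt (comp (H R) R) (H R) :=
  vcomp (Hmor H mu) (Hth H R eta).
Arguments tildeH_action : clear implicits.

Definition is_representation (H : ArityData) (R : Functor) (eta : Nt IdF R)
  (mu : Nt (comp R R) R) (r : Nt (H R) R) : Prop :=
  ocf R /\ is_monad eta mu /\
  natural r /\
  neq (vcomp r (tildeH_action H R eta mu)) (vcomp mu (whiskerR r R)).
Arguments is_representation : clear implicits.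

Definition rep_morphism (H : ArityData) (R S : Functor)
  (etaR : Nt IdF R) (muR : Nt (comp R R) R) (r : Nt (H R) R)
  (etaS : Nt IdF S) (muS : Nt (comp S S) S) (s : Nt (H S) S) (m : Nt R S) : Prop :=
  monad_morphism etaR muR etaS muS m /\
  neq (vcomp m r) (vcomp s (Hmor H m)).
Arguments rep_morphism : clear implicits.

(* The initial algebra T of X |-> I + H X is, as in Adamek's construction, the
   colimit of the initial chain 0 -> I + H 0 -> ..., computed pointwise in Set:
   the chain colimit carries an algebra structure because H preserves it, and
   initiality makes it isomorphic to T.  Iterating along the chain, and using
   that the strength theta is compatible with whiskering and composition, one
   gets for every pointed functor (Z, e) and all f : Z -> X, g : H X -> X a
   unique h : T Z -> X with h . alpha Z = [f, g . H h . theta_{T,(Z,e)}]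
   (generalized iteration).  Substitution mu is the solution for (T, eta),
   f = id, g = alpha . inr; the monad laws, the module law of alpha . inr and
   the compatibility with substitution of the algebra morphism T -> S induced
   by a representation (S, s) are all instances of the uniqueness of such
   solutions.  Uniqueness of representation morphisms is initiality of T,
   since a representation morphism is an algebra morphism into [eta_S, s]. *)

From Stdlib Require Import FunctionalExtensionality PropExtensionality ProofIrrelevance
  IndefiniteDescription Relations.

Section SetColimit.

Context {A : nat -> Type} {a : forall n, A n -> A (S n)} {C : Type} {c : forall n, A n -> C}.
Variable Hc : is_colim_set a c.

Definition colim_lift (D : Type) (d : forall n, A n -> D)
  (Hd : forall n x, d (S n) (a n x) = d n x) : C -> D :=
  proj1_sig (constructive_indefinite_description _ (proj2 Hc D d Hd)).

Lemma colim_lift_in D d Hd n x : colim_lift D d Hd (c n x) = d n x.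
Proof.
  unfold colim_lift; destruct (constructive_indefinite_description _ _) as [u [Hin Huniq]]; auto.
Qed.

Lemma colim_lift_unique D d Hd (v : C -> D) :
  (forall n x, v (c n x) = d n x) -> forall y, v y = colim_lift D d Hd y.
Proof.
  unfold colim_lift; destruct (constructive_indefinite_description _ _) as [u [Hin Huniq]]; auto.
Qed.

Lemma colim_fun_ext D (v1 v2 : C -> D) :
  (forall n x, v1 (c n x) = v2 (c n x)) -> forall y, v1 y = v2 y.
Proof.
  intros E y.
  assert (Hd : forall n x, v1 (c (S n) (a n x)) = v1 (c n x)) by (intros; now rewrite (proj1 Hc)).
  rewrite (colim_lift_unique D _ Hd v1 (fun _ _ => eq_refl)).
  symmetry; apply colim_lift_unique; intros; now rewrite E.
Qed.

Lemma is_colim_set_bij (C' : Type) (c' : forall n, A n -> C') (h : C -> C') (g : C' -> C) :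
  (forall n x, h (c n x) = c' n x) -> (forall y, h (g y) = y) -> (forall z, g (h z) = z) ->
  is_colim_set a c'.
Proof.
  intros Hh hg gh. split.
  - intros n x. rewrite <- !Hh. now rewrite (proj1 Hc).
  - intros D d Hd. exists (fun y => colim_lift D d Hd (g y)). split.
    + intros n x. rewrite <- Hh, gh. apply colim_lift_in.
    + intros v Hv y. rewrite <- (hg y) at 1.
      apply (colim_lift_unique D d Hd (fun z => v (h z))). intros; now rewrite Hh.
Qed.

End SetColimit.

(* The colimit of a chain of types, as the set of equivalence classes of the
   relation generated by [(n, x) ~ (S n, a n x)]; classes are predicates, so
   equality of points is propositional extensionality. *)
Section ChainColimit.

Context {A : nat -> Type} (a : forall n, A n -> A (S n)).

Inductive chain_step : {n & A n} -> {n & A n} -> Prop :=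
  | chain_step_in n x : chain_step (existT _ n x) (existT _ (S n) (a n x)).

Definition chain_eqv := clos_refl_sym_trans _ chain_step.

Definition chain_colim := {P : {n & A n} -> Prop | exists s, P = chain_eqv s}.

Definition colim_in n (x : A n) : chain_colim :=
  exist _ (chain_eqv (existT _ n x)) (ex_intro _ _ eq_refl).

Definition colim_rep (y : chain_colim) : {n & A n} :=
  proj1_sig (constructive_indefinite_description _ (proj2_sig y)).

Definition colim_rec {D : Type} (d : forall n, A n -> D) (y : chain_colim) : D :=
  d (projT1 (colim_rep y)) (projT2 (colim_rep y)).

Lemma colim_rep_spec (y : chain_colim) : proj1_sig y = chain_eqv (colim_rep y).
Proof. unfold colim_rep; destruct (constructive_indefinite_description _ _); auto. Qed.

Lemma colim_in_rep (y : chain_colim) : y = colim_in (projT1 (colim_rep y)) (projT2 (colim_rep y)).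
Proof.
  destruct y as [P HP]; unfold colim_in.
  apply subset_eq_compat; etransitivity; [exact (colim_rep_spec (exist _ P HP))|].
  now destruct (colim_rep _).
Qed.

Lemma colim_in_step n x : colim_in (S n) (a n x) = colim_in n x.
Proof.
  apply subset_eq_compat; extensionality t; apply propositional_extensionality;
    split; intro H; eapply rst_trans; eauto using rst_step, rst_sym, chain_step.
Qed.

Lemma colim_rec_in {D : Type} (d : forall n, A n -> D) :
  (forall n x, d (S n) (a n x) = d n x) -> forall n x, colim_rec d (colim_in n x) = d n x.
Proof.
  intros Hd n x.
  assert (Hresp : forall s t, chain_eqv s t -> d (projT1 s) (projT2 s) = d (projT1 t) (projT2 t)).
  { intros s t Hst; induction Hst as [s t []| | |]; simpl; congruence. }
  symmetry; apply (Hresp (existT _ n x)).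
  change (proj1_sig (colim_in n x) (colim_rep (colim_in n x))).
  rewrite colim_rep_spec; apply rst_refl.
Qed.

Lemma colim_in_is_colim : is_colim_set a colim_in.
Proof.
  split; [exact colim_in_step|].
  intros D d Hd. exists (colim_rec d). split.
  - now apply colim_rec_in.
  - intros v Hv y. rewrite (colim_in_rep y) at 1. apply Hv.
Qed.

End ChainColimit.

Lemma nt_ext {F G : Functor} {a b : Nt F G} : neq a b -> a = b.
Proof. intro E; extensionality A; extensionality x; apply E. Qed.

Section FunctorLaws.

Context {F : Functor} (HF : is_functor F).

Lemma fmap_id_ext A (f : A -> A) x : (forall y, f y = y) -> fmap F f x = x.
Proof.
  intro E; replace f with (fun y : A => y) by (extensionality y; now rewrite E).
  apply (proj1 HF).
Qed.

Lemma fmap_comp_ext A B C (f : A -> B) (g : B -> C) (h : A -> C) x :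
  (forall y, g (f y) = h y) -> fmap F g (fmap F f x) = fmap F h x.
Proof.
  intro E; replace h with (fun y => g (f y)) by (extensionality y; apply E).
  symmetry; apply (proj2 HF).
Qed.

End FunctorLaws.

Lemma natural_idn F : natural (idn F).
Proof. intros A B f x; reflexivity. Qed.

Lemma natural_vcomp {F G K} {b : Nt G K} {a : Nt F G} :
  natural a -> natural b -> natural (vcomp b a).
Proof. intros Ha Hb A B f x; unfold vcomp; now rewrite Ha, Hb. Qed.

Lemma natural_whiskerR {F G} {a : Nt F G} {Z} : natural a -> natural (whiskerR a Z).
Proof. intros Ha A B f x; apply Ha. Qed.

Lemma natural_hcomp {F F' G G'} {a : Nt F F'} {f : Nt G G'} :
  is_functor F' -> natural a -> natural f -> natural (hcomp a f).
Proof.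
  intros HF Ha Hf A B g x; unfold hcomp; simpl; rewrite Ha.
  rewrite (fmap_comp_ext HF _ _ _ (fmap G g) (f B) (fun y => fmap G' g (f A y)))
    by (intro; apply Hf).
  symmetry; now apply fmap_comp_ext.
Qed.

Lemma natural_sum_nat {F G G'} {h : Nt G G'} : natural h -> natural (sum_nat F h).
Proof. intros Hh A B f [y|z]; simpl; [|rewrite Hh]; reflexivity. Qed.

Lemma IdF_ocf : ocf IdF.
Proof. split; [split; reflexivity | intros A a C c Hc; exact Hc]. Qed.

Lemma comp_ocf {F G} : ocf F -> ocf G -> ocf (comp F G).
Proof.
  intros [HF HFc] [HG HGc]; split; [split|].
  - intros A x; apply (fmap_id_ext HF); intro; apply (proj1 HG).
  - intros A B C f g x; simpl; symmetry; apply (fmap_comp_ext HF).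
    intro; symmetry; apply (proj2 HG).
  - intros A a C c Hc; apply HFc, HGc, Hc.
Qed.

Definition EmptyF : Functor := MkFunctor (fun _ => Empty_set) (fun A B f e => match e with end).

Lemma EmptyF_ocf : ocf EmptyF.
Proof.
  split; [split; intros; destruct x|].
  intros A a C c Hc; split; [intros n []|].
  intros D d Hd; exists (fun e : Empty_set => match e with end).
  split; [intros n []|intros v _ []].
Qed.

Lemma is_colim_set_sum (A B : nat -> Type) (a : forall n, A n -> A (S n))
  (b : forall n, B n -> B (S n)) C D (c : forall n, A n -> C) (d : forall n, B n -> D) :
  is_colim_set a c -> is_colim_set b d ->
  is_colim_set (A := fun n => (A n + B n)%type)
    (fun n x => match x with inl y => inl (a n y) | inr z => inr (b n z) end)
    (fun n x => match x with inl y => inl (c n y) | inr z => inr (d n z) end).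
Proof.
  intros Hc Hd; split.
  - intros n [y|z]; f_equal; [apply (proj1 Hc)|apply (proj1 Hd)].
  - intros E e He.
    assert (Hl : forall n y, e (S n) (inl (a n y)) = e n (inl y)) by (intros; apply (He n (inl y))).
    assert (Hr : forall n z, e (S n) (inr (b n z)) = e n (inr z)) by (intros; apply (He n (inr z))).
    exists (fun s => match s with
             | inl y => colim_lift Hc E (fun n y => e n (inl y)) Hl y
             | inr z => colim_lift Hd E (fun n z => e n (inr z)) Hr z end).
    split.
    + intros n [y|z].
      * exact (colim_lift_in Hc _ (fun n y => e n (inl y)) Hl n y).
      * exact (colim_lift_in Hd _ (fun n z => e n (inr z)) Hr n z).
    + intros v Hv [y|z].
      * apply (colim_lift_unique Hc _ _ Hl (fun y => v (inl y))); intros n x; apply (Hv n (inl x)).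
      * apply (colim_lift_unique Hd _ _ Hr (fun z => v (inr z))); intros n x; apply (Hv n (inr x)).
Qed.

Lemma SumF_IdF_ocf {F} : ocf F -> ocf (SumF IdF F).
Proof.
  intros [[HF1 HF2] HFc]; split; [split|].
  - intros A [y|z]; simpl; f_equal; apply HF1.
  - intros A B C f g [y|z]; simpl; f_equal; apply HF2.
  - intros A a C c Hc; exact (is_colim_set_sum _ _ _ _ _ _ _ _ Hc (HFc _ _ _ _ Hc)).
Qed.

Section FunctorChain.

Variables (X : nat -> Functor) (x : forall n, Nt (X n) (X (S n))).
Hypothesis x_natural : forall n, natural (x n).

Definition colim_functor : Functor :=
  MkFunctor (fun A => chain_colim (fun n => x n A))
    (fun A B f => colim_rec _ (fun n y => colim_in (fun n => x n B) n (fmap (X n) f y))).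

Definition colim_functor_in n : Nt (X n) colim_functor := fun A => colim_in (fun n => x n A) n.

Lemma colim_functor_map_in A B (f : A -> B) n y :
  fmap colim_functor f (colim_functor_in n A y) = colim_functor_in n B (fmap (X n) f y).
Proof.
  apply (colim_rec_in _ (fun m z => colim_in (fun n => x n B) m (fmap (X m) f z))).
  intros m z; cbv beta; rewrite <- (x_natural m A B f z); apply (colim_in_step (fun n => x n B)).
Qed.

Lemma colim_functor_is_functor : (forall n, is_functor (X n)) -> is_functor colim_functor.
Proof.
  intros HX; split.
  - intros A; apply (colim_fun_ext (colim_in_is_colim _)); intros n y.
    change (fmap colim_functor (fun y => y) (colim_functor_in n A y) = colim_functor_in n A y).
    rewrite colim_functor_map_in; f_equal; apply HX.
  - intros A B C f g; apply (colim_fun_ext (colim_in_is_colim _)); intros n y.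
    change (fmap colim_functor (fun y => g (f y)) (colim_functor_in n A y)
            = fmap colim_functor g (fmap colim_functor f (colim_functor_in n A y))).
    rewrite !colim_functor_map_in; f_equal; apply HX.
Qed.

Hypothesis X_ocf : forall n, ocf (X n).

(* Colimits commute with colimits: the comparison map from the colimit over
   [k] of [colim_n X n (A k)] to [colim_n X n C] is inverted by the map built
   row by row from the colimits [X n C = colim_k X n (A k)]. *)
Lemma colim_functor_ocf : ocf colim_functor.
Proof.
  assert (Hfun : is_functor colim_functor)
    by (apply colim_functor_is_functor; intro n; apply X_ocf).
  split; [exact Hfun|].
  intros A a C c Hc.
  set (CF := colim_functor); set (a2 := fun k => fmap CF (a k)).
  assert (Hrow : forall n, is_colim_set (A := fun k => X n (A k))
                             (fun k => fmap (X n) (a k)) (fun k => fmap (X n) (c k)))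
    by (intro n; apply (proj2 (X_ocf n)), Hc).
  assert (Hd : forall n k v, colim_in a2 (S k) (colim_functor_in n (A (S k)) (fmap (X n) (a k) v))
                             = colim_in a2 k (colim_functor_in n (A k) v)).
  { intros n k v; rewrite <- colim_functor_map_in; apply (colim_in_step a2). }
  set (gn := fun n => colim_lift (Hrow n) _ _ (Hd n)).
  assert (Hgn : forall n k v,
             gn n (fmap (X n) (c k) v) = colim_in a2 k (colim_functor_in n (A k) v))
    by (intros n k v; exact (colim_lift_in (Hrow n) _ _ (Hd n) k v)).
  assert (Hgn_step : forall n u, gn (S n) (x n C u) = gn n u).
  { intro n; apply (colim_fun_ext (Hrow n)); intros k v.
    rewrite x_natural, !Hgn; unfold colim_functor_in.
    now rewrite (colim_in_step (fun m => x m (A k))). }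
  assert (Hh : forall k w, fmap CF (c (S k)) (a2 k w) = fmap CF (c k) w).
  { intros k w; apply (fmap_comp_ext Hfun); intro; apply (proj1 Hc). }
  set (g := colim_rec (fun n => x n C) gn).
  set (h := colim_rec a2 (fun k => fmap CF (c k))).
  apply (is_colim_set_bij (colim_in_is_colim a2) _ _ h g).
  - intros k w; exact (colim_rec_in _ _ Hh k w).
  - apply (colim_fun_ext (colim_in_is_colim _)); intros n u.
    unfold g; rewrite colim_rec_in by exact Hgn_step.
    revert u; apply (colim_fun_ext (Hrow n) _ (fun u => h (gn n u)) (colim_functor_in n C)).
    intros k v; rewrite Hgn; unfold h; rewrite colim_rec_in by exact Hh.
    apply colim_functor_map_in.
  - apply (colim_fun_ext (colim_in_is_colim a2)); intro k.
    apply (colim_fun_ext (colim_in_is_colim _) _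
             (fun w => g (h (colim_in a2 k w))) (colim_in a2 k)).
    intros n v; unfold h; rewrite colim_rec_in by exact Hh.
    change (g (fmap CF (c k) (colim_functor_in n (A k) v))
            = colim_in a2 k (colim_functor_in n (A k) v)).
    unfold CF; rewrite colim_functor_map_in; unfold g, colim_functor_in.
    rewrite colim_rec_in by exact Hgn_step; apply Hgn.
Qed.

Lemma colim_functor_is_colim_end : is_colim_end x colim_functor_in.
Proof.
  split; [exact colim_functor_ocf|split; [|split]].
  - intros n A B f y; symmetry; apply colim_functor_map_in.
  - intros n A y; apply (colim_in_step (fun m => x m A)).
  - intros D d HD Hdn Hdc.
    assert (Hd : forall A n y, d (S n) A (x n A y) = d n A y) by (intros; apply Hdc).
    exists (fun A => colim_rec _ (fun n => d n A)); split; [|split].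
    + intros A B f; apply (colim_fun_ext (colim_in_is_colim _)); intros n y.
      change (colim_rec _ (fun n => d n B) (fmap colim_functor f (colim_functor_in n A y))
              = fmap D f (colim_rec _ (fun n => d n A) (colim_functor_in n A y))).
      rewrite colim_functor_map_in; unfold colim_functor_in; rewrite !colim_rec_in by apply Hd.
      apply Hdn.
    + intros n A y; exact (colim_rec_in _ _ (Hd A) n y).
    + intros v _ Hv A; apply (colim_fun_ext (colim_in_is_colim _)); intros n y.
      rewrite colim_rec_in by apply Hd; apply Hv.
Qed.

Lemma is_colim_end_pointwise (L : Functor) (l : forall n, Nt (X n) L) :
  is_colim_end x l ->
  forall A, is_colim_set (A := fun n => X n A) (fun n => x n A) (fun n => l n A).
Proof.
  intros Hl.
  destruct colim_functor_is_colim_end as [Ho [Hin [Hstep Hcf]]].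
  destruct Hl as [HL [Hln [Hlc Hu]]].
  destruct (Hcf L l HL Hln Hlc) as [v [Hvn [Hvc _]]].
  destruct (Hu _ _ Ho Hin Hstep) as [u [Hun [Huc _]]].
  destruct (Hu L l HL Hln Hlc) as [w [_ [_ Hw]]].
  assert (Hvu : forall A z, v A (u A z) = z).
  { assert (E1 : neq (vcomp v u) w).
    { apply Hw; [now apply natural_vcomp|].
      intros n B y; exact (eq_trans (f_equal (v B) (Huc n B y)) (Hvc n B y)). }
    assert (E2 : neq (idn L) w) by (apply Hw; [apply natural_idn|intros n B y; reflexivity]).
    intros A z; exact (eq_trans (E1 A z) (eq_sym (E2 A z))). }
  intro A; apply (is_colim_set_bij (colim_in_is_colim _) _ _ (v A) (u A)).
  - intros n y; apply Hvc.
  - apply Hvu.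
  - apply (colim_fun_ext (colim_in_is_colim _)); intros n y.
    change (u A (v A (colim_functor_in n A y)) = colim_functor_in n A y).
    exact (eq_trans (f_equal (u A) (Hvc n A y)) (Huc n A y)).
Qed.

End FunctorChain.

Lemma pointwise_is_colim_end (X : nat -> Functor) (x : forall n, Nt (X n) (X (S n)))
  (L : Functor) (l : forall n, Nt (X n) L) :
  ocf L -> (forall n, natural (l n)) -> (forall n, neq (vcomp (l (S n)) (x n)) (l n)) ->
  (forall A, is_colim_set (A := fun n => X n A) (fun n => x n A) (fun n => l n A)) ->
  is_colim_end x l.
Proof.
  intros HL Hln Hlc Hpw; do 3 (split; [assumption|]).
  intros D d HD Hdn Hdc.
  assert (Hd : forall A n y, d (S n) A (x n A y) = d n A y) by (intros; apply Hdc).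
  exists (fun A => colim_lift (Hpw A) (D A) (fun n => d n A) (Hd A)); split; [|split].
  - intros A B f; apply (colim_fun_ext (Hpw A)); intros n y.
    rewrite <- Hln; refine (eq_trans (colim_lift_in (Hpw B) _ _ (Hd B) n _) _).
    exact (eq_trans (Hdn n A B f y)
             (f_equal (fmap D f) (eq_sym (colim_lift_in (Hpw A) _ _ (Hd A) n y)))).
  - intros n A y; exact (colim_lift_in (Hpw A) _ _ (Hd A) n y).
  - intros v _ Hv A; apply (colim_lift_unique (Hpw A) _ _ (Hd A) (v A)); intros n y; apply Hv.
Qed.

Lemma Hmor_ext (H : ArityData) X Y (a b : Nt X Y) :
  neq a b -> forall A z, Hmor H a A z = Hmor H b A z.
Proof. intro E; now rewrite (nt_ext E). Qed.

Section Arity.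

Variable H : ArityData.
Hypothesis HS : strengthened_arity H.

Lemma H_ocf {X} : ocf X -> ocf (H X).
Proof. apply HS. Qed.

Lemma Hmor_natural {X Y} {a : Nt X Y} : ocf X -> ocf Y -> natural a -> natural (Hmor H a).
Proof. apply HS. Qed.

Lemma Hmor_idn {X} : ocf X -> Hmor H (idn X) = idn (H X).
Proof. intro HX; apply nt_ext, HS, HX. Qed.

Lemma Hmor_vcomp {X Y K} {a : Nt X Y} {b : Nt Y K} :
  ocf X -> ocf Y -> ocf K -> natural a -> natural b ->
  forall A z, Hmor H b A (Hmor H a A z) = Hmor H (vcomp b a) A z.
Proof. intros; symmetry; apply HS; assumption. Qed.

Lemma H_colim_end (X : nat -> Functor) (x : forall n, Nt (X n) (X (S n)))
  (L : Functor) (l : forall n, Nt (X n) L) :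
  (forall n, ocf (X n)) -> (forall n, natural (x n)) -> is_colim_end x l ->
  is_colim_end (X := fun n => H (X n)) (fun n => Hmor H (x n)) (fun n => Hmor H (l n)).
Proof. apply HS. Qed.

Lemma Hth_natural {X Z} {e : Nt IdF Z} : ocf X -> ocf Z -> natural e -> natural (Hth H X e).
Proof. apply HS. Qed.

Lemma Hth_hcomp_natural {X X' Z Z'} {e : Nt IdF Z} {e' : Nt IdF Z'} {a : Nt X X'} {f : Nt Z Z'} :
  ocf X -> ocf X' -> ocf Z -> ocf Z' -> natural e -> natural e' -> natural a -> natural f ->
  neq (vcomp f e) e' ->
  forall A z, Hth H X' e' A (hcomp (Hmor H a) f (A := A) z) = Hmor H (hcomp a f) A (Hth H X e A z).
Proof. intros; apply HS; assumption. Qed.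

Lemma Hth_idn {X} : ocf X -> forall A z, Hth H X (idn IdF) A z = z.
Proof. intros; apply HS; assumption. Qed.

Lemma Hth_hcomp {X Z1 Z2} {e1 : Nt IdF Z1} {e2 : Nt IdF Z2} :
  ocf X -> ocf Z1 -> ocf Z2 -> natural e1 -> natural e2 ->
  forall A z, Hth H X (hcomp e1 e2) A z = Hth H (comp X Z1) e2 A (Hth H X e1 (Z2 A) z).
Proof. intros; apply HS; assumption. Qed.

Lemma Hth_whiskerR {Y Y' Z} {a : Nt Y Y'} {e : Nt IdF Z} :
  ocf Y -> ocf Y' -> ocf Z -> natural e -> natural a ->
  forall A v, Hth H Y' e A (Hmor H a (Z A) v) = Hmor H (whiskerR a Z) A (Hth H Y e A v).
Proof.
  intros HY HY' HZ He Ha A v.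
  assert (E : Hmor H a (Z A) v = hcomp (Hmor H a) (idn Z) (A := A) v)
    by (symmetry; apply (fmap_id_ext (proj1 (H_ocf HY'))); reflexivity).
  rewrite E, (Hth_hcomp_natural HY HY' HZ HZ He He Ha (natural_idn Z)) by (intros ? ?; reflexivity).
  apply Hmor_ext; intros B x; apply (fmap_id_ext (proj1 HY')); reflexivity.
Qed.

Lemma Hth_fmap {Y Z Z'} {e : Nt IdF Z} {e' : Nt IdF Z'} {f : Nt Z Z'} :
  ocf Y -> ocf Z -> ocf Z' -> natural e -> natural e' -> natural f -> neq (vcomp f e) e' ->
  forall A z, Hth H Y e' A (fmap (H Y) (f A) z) = Hmor H (hcomp (idn Y) f) A (Hth H Y e A z).
Proof.
  intros HY HZ HZ' He He' Hf Hfe A z.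
  change (fmap (H Y) (f A) z) with (hcomp (idn (H Y)) f (A := A) z).
  rewrite <- (Hmor_idn HY).
  exact (Hth_hcomp_natural HY HY HZ HZ' He He' (natural_idn Y) Hf Hfe A z).
Qed.

Lemma Hmor_Hth_Hmor {Y Y' Z X} {e : Nt IdF Z} {a : Nt Y Y'} {h : Nt (comp Y' Z) X} :
  ocf Y -> ocf Y' -> ocf Z -> ocf X -> natural e -> natural a -> natural h ->
  forall A v, Hmor H h A (Hth H Y' e A (Hmor H a (Z A) v))
              = Hmor H (vcomp h (whiskerR a Z)) A (Hth H Y e A v).
Proof.
  intros HY HY' HZ HX He Ha Hh A v.
  rewrite (Hth_whiskerR HY HY' HZ He Ha).
  apply Hmor_vcomp; auto using comp_ocf, natural_whiskerR.
Qed.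

Fixpoint init_chain (n : nat) : Functor :=
  match n with 0 => EmptyF | S n => SumF IdF (H (init_chain n)) end.

Fixpoint init_chain_step (n : nat) : Nt (init_chain n) (init_chain (S n)) :=
  match n return Nt (init_chain n) (init_chain (S n)) with
  | 0 => fun A e => match e with end
  | S m => sum_nat IdF (Hmor H (init_chain_step m))
  end.

Lemma init_chain_ocf n : ocf (init_chain n).
Proof. induction n; [exact EmptyF_ocf | exact (SumF_IdF_ocf (H_ocf IHn))]. Qed.

Lemma init_chain_step_natural n : natural (init_chain_step n).
Proof.
  induction n; [intros A B f []|].
  apply natural_sum_nat, Hmor_natural;
    [apply init_chain_ocf | apply (init_chain_ocf (S n)) | exact IHn].
Qed.

Section InitialAlgebra.

Variables (T : Functor) (alpha : Nt (SumF IdF (H T)) T).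
Hypothesis I : initial_algebra H T alpha.

Let T_ocf : ocf T := proj1 I.
Let alpha_natural : natural alpha := proj1 (proj2 I).

Fixpoint chain_cocone (n : nat) : Nt (init_chain n) T :=
  match n return Nt (init_chain n) T with
  | 0 => fun A e => match e with end
  | S m => vcomp alpha (sum_nat IdF (Hmor H (chain_cocone m)))
  end.

Lemma chain_cocone_natural n : natural (chain_cocone n).
Proof.
  induction n; [intros A B f []|].
  apply natural_vcomp; [apply natural_sum_nat, Hmor_natural|]; auto using init_chain_ocf.
Qed.

Lemma chain_cocone_step n A x : chain_cocone (S n) A (init_chain_step n A x) = chain_cocone n A x.
Proof.
  revert A x; induction n; intros A x; [destruct x|]; destruct x as [y|z]; [reflexivity|].
  change (alpha A (inr (Hmor H (chain_cocone (S n)) A (Hmor H (init_chain_step n) A z)))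
          = alpha A (inr (Hmor H (chain_cocone n) A z))); do 2 f_equal.
  rewrite Hmor_vcomp; auto using init_chain_ocf, init_chain_step_natural, chain_cocone_natural.
  apply Hmor_ext; intros B w; apply IHn.
Qed.

Section AlgebraOnChainColimit.

Variables (L : Functor) (l : forall n, Nt (init_chain n) L).
Hypothesis Hl : is_colim_end init_chain_step l.

Lemma chain_colim_pointwise :
  forall A, is_colim_set (A := fun n => init_chain n A)
              (fun n => init_chain_step n A) (fun n => l n A).
Proof. exact (is_colim_end_pointwise _ _ init_chain_step_natural init_chain_ocf _ _ Hl). Qed.

Lemma H_chain_colim_pointwise :
  forall A, is_colim_set (A := fun n => H (init_chain n) A)
              (fun n => Hmor H (init_chain_step n) A) (fun n => Hmor H (l n) A).
Proof.
  apply is_colim_end_pointwise.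
  - intro n; apply Hmor_natural; auto using init_chain_ocf, init_chain_step_natural.
  - intro n; apply H_ocf, init_chain_ocf.
  - apply H_colim_end; auto using init_chain_ocf, init_chain_step_natural.
Qed.

Lemma chain_colim_algebra : exists beta : Nt (SumF IdF (H L)) L, natural beta /\
  forall n A x, beta A (sum_nat IdF (Hmor H (l n)) A x) = l (S n) A x.
Proof.
  pose proof Hl as [HL [Hln [Hlc _]]].
  destruct (H_colim_end _ _ _ _ init_chain_ocf init_chain_step_natural Hl) as [_ [_ [_ Hu]]].
  destruct (Hu L (fun n A z => l (S n) A (inr z)) HL (fun n A B f z => Hln (S n) A B f (inr z))
              (fun n A z => Hlc (S n) A (inr z))) as [b [Hbn [Hbl _]]].
  assert (Hinl : forall n A y, l (S n) A (inl y) = l 1 A (inl y)).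
  { induction n; intros A y; [reflexivity|]; rewrite <- IHn; exact (Hlc (S n) A (inl y)). }
  exists (fun A w => match w with inl y => l 1 A (inl y) | inr z => b A z end); split.
  - intros A B f [y|z]; [exact (Hln 1 A B f (inl y)) | apply Hbn].
  - intros n A [y|z]; [symmetry; apply Hinl | apply Hbl].
Qed.

Variable beta : Nt (SumF IdF (H L)) L.
Hypothesis beta_natural : natural beta.
Hypothesis beta_l : forall n A x, beta A (sum_nat IdF (Hmor H (l n)) A x) = l (S n) A x.

Lemma algebra_morphism_chain_cocone (k : Nt T L) :
  natural k -> neq (vcomp k alpha) (vcomp beta (sum_nat IdF (Hmor H k))) ->
  forall n A x, k A (chain_cocone n A x) = l n A x.
Proof.
  intros Hkn Hk n; induction n; intros A x; [destruct x|].
  refine (eq_trans (Hk A (sum_nat IdF (Hmor H (chain_cocone n)) A x)) _).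
  unfold vcomp; rewrite <- beta_l; f_equal.
  destruct x as [y|z]; [reflexivity|]; cbn; f_equal.
  rewrite Hmor_vcomp; auto using init_chain_ocf, chain_cocone_natural; [|apply Hl].
  apply Hmor_ext; exact IHn.
Qed.

Lemma chain_lift_algebra_morphism (j : Nt L T) :
  natural j -> (forall n, neq (vcomp j (l n)) (chain_cocone n)) ->
  neq (vcomp j beta) (vcomp alpha (sum_nat IdF (Hmor H j))).
Proof.
  intros Hjn Hj A [y|w]; unfold vcomp.
  - exact (eq_trans (f_equal (j A) (beta_l 0 A (inl y))) (Hj 1 A (inl y))).
  - revert w; apply (colim_fun_ext (H_chain_colim_pointwise A)); intros n v.
    refine (eq_trans (f_equal (j A) (beta_l n A (inr v))) (eq_trans (Hj (S n) A (inr v)) _)).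
    change (alpha A (inr (Hmor H (chain_cocone n) A v))
            = alpha A (inr (Hmor H j A (Hmor H (l n) A v)))); do 2 f_equal.
    rewrite Hmor_vcomp; auto using init_chain_ocf; try apply Hl.
    apply Hmor_ext; intros B x; symmetry; apply Hj.
Qed.

Lemma chain_cocone_colim_of_algebra :
  forall A, is_colim_set (A := fun n => init_chain n A)
              (fun n => init_chain_step n A) (fun n => chain_cocone n A).
Proof.
  pose proof I as [_ [_ Hinit]].
  destruct (Hinit L beta (proj1 Hl) beta_natural) as [k [Hkn [Hk _]]].
  destruct (proj2 (proj2 (proj2 Hl)) T chain_cocone T_ocf chain_cocone_natural
              (fun n A x => chain_cocone_step n A x)) as [j [Hjn [Hj _]]].
  assert (Hkc := algebra_morphism_chain_cocone k Hkn Hk).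
  assert (Hjk : forall A z, j A (k A z) = z).
  { destruct (Hinit T alpha T_ocf alpha_natural) as [h [_ [_ Hu]]].
    assert (E1 : neq (vcomp j k) h).
    { apply Hu; [exact (natural_vcomp Hkn Hjn)|].
      intros A w; refine (eq_trans (f_equal (j A) (Hk A w)) _).
      refine (eq_trans (chain_lift_algebra_morphism j Hjn Hj A _) _).
      destruct w as [y|z]; [reflexivity|].
      unfold vcomp, sum_nat; do 2 f_equal; apply Hmor_vcomp; auto; apply Hl. }
    assert (E2 : neq (idn T) h).
    { apply Hu; [apply natural_idn|].
      intros A [y|z]; unfold vcomp, sum_nat; [reflexivity|]; now rewrite Hmor_idn. }
    intros A z; exact (eq_trans (E1 A z) (eq_sym (E2 A z))). }
  intro A; apply (is_colim_set_bij (chain_colim_pointwise A)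
                   _ _ (j A) (k A)).
  - intros n x; apply Hj.
  - apply Hjk.
  - apply (colim_fun_ext (chain_colim_pointwise A)).
    intros n x; exact (eq_trans (f_equal (k A) (Hj n A x)) (Hkc n A x)).
Qed.

End AlgebraOnChainColimit.

Lemma chain_cocone_colim :
  forall A, is_colim_set (A := fun n => init_chain n A)
              (fun n => init_chain_step n A) (fun n => chain_cocone n A).
Proof.
  assert (Hc := colim_functor_is_colim_end _ _ init_chain_step_natural init_chain_ocf).
  destruct (chain_colim_algebra _ _ Hc) as [beta [Hbn Hb]].
  exact (chain_cocone_colim_of_algebra _ _ Hc _ Hbn Hb).
Qed.

Lemma chain_cocone_is_colim_end : is_colim_end init_chain_step chain_cocone.
Proof.
  apply pointwise_is_colim_end; auto using chain_cocone_natural, chain_cocone_colim.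
  intros n A x; apply chain_cocone_step.
Qed.

Definition gen_iter_eq {Z} (e : Nt IdF Z) {X} (f : Nt Z X) (g : Nt (H X) X)
  (h : Nt (comp T Z) X) : Prop :=
  forall A x, h A (alpha (Z A) x) =
    match x with inl y => f A y | inr z => g A (Hmor H h A (Hth H T e A z)) end.

Section GeneralizedIteration.

Context {Z : Functor} {e : Nt IdF Z} {X : Functor} {f : Nt Z X} {g : Nt (H X) X}.
Hypotheses (Z_ocf : ocf Z) (e_natural : natural e) (X_ocf : ocf X)
  (f_natural : natural f) (g_natural : natural g).

Fixpoint chain_iter (n : nat) : Nt (comp (init_chain n) Z) X :=
  match n return Nt (comp (init_chain n) Z) X with
  | 0 => fun A v => match v with end
  | S m => fun A x => match x with
                      | inl y => f A y
                      | inr z => g A (Hmor H (chain_iter m) A (Hth H (init_chain m) e A z))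
                      end
  end.

Let chain_Z_ocf n : ocf (comp (init_chain n) Z) := comp_ocf (init_chain_ocf n) Z_ocf.

Lemma chain_iter_natural n : natural (chain_iter n).
Proof.
  induction n as [|n IHn]; intros A B k x; [destruct x|].
  destruct x as [y|z]; [apply f_natural|].
  change (g B (Hmor H (chain_iter n) B
                 (Hth H (init_chain n) e B (fmap (comp (H (init_chain n)) Z) k z)))
          = fmap X k (g A (Hmor H (chain_iter n) A (Hth H (init_chain n) e A z)))).
  rewrite (Hth_natural (init_chain_ocf n) Z_ocf e_natural).
  rewrite (Hmor_natural (chain_Z_ocf n) X_ocf IHn); apply g_natural.
Qed.

Lemma chain_iter_step n A x : chain_iter (S n) A (init_chain_step n (Z A) x) = chain_iter n A x.
Proof.
  revert A x; induction n as [|n IHn]; intros A x; [destruct x|].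
  destruct x as [y|z]; [reflexivity|].
  change (g A (Hmor H (chain_iter (S n)) A
                 (Hth H (init_chain (S n)) e A (Hmor H (init_chain_step n) (Z A) z)))
          = g A (Hmor H (chain_iter n) A (Hth H (init_chain n) e A z))); f_equal.
  rewrite Hmor_Hth_Hmor; auto using init_chain_ocf, init_chain_step_natural, chain_iter_natural.
  apply Hmor_ext; intros B v; apply IHn.
Qed.

Lemma gen_iter_on_chain (h : Nt (comp T Z) X) :
  natural h -> gen_iter_eq e f g h -> forall n A x, h A (chain_cocone n (Z A) x) = chain_iter n A x.
Proof.
  intros Hhn Hh n; induction n as [|n IHn]; intros A x; [destruct x|].
  refine (eq_trans (Hh A _) _); destruct x as [y|v]; [reflexivity|]; cbn.
  rewrite Hmor_Hth_Hmor; auto using init_chain_ocf, chain_cocone_natural; f_equal.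
  apply Hmor_ext; exact IHn.
Qed.

Lemma gen_iter_unique (h1 h2 : Nt (comp T Z) X) :
  natural h1 -> natural h2 -> gen_iter_eq e f g h1 -> gen_iter_eq e f g h2 -> neq h1 h2.
Proof.
  intros Hn1 Hn2 H1 H2 A; apply (colim_fun_ext (chain_cocone_colim (Z A))); intros n x.
  now rewrite (gen_iter_on_chain h1 Hn1 H1), (gen_iter_on_chain h2 Hn2 H2).
Qed.

Lemma gen_iter_exists : exists h, natural h /\ gen_iter_eq e f g h.
Proof.
  set (h := fun A => colim_lift (chain_cocone_colim (Z A)) (X A) (fun n => chain_iter n A)
                                (fun n x => chain_iter_step n A x) : comp T Z A -> X A).
  assert (Hh : forall n A x, h A (chain_cocone n (Z A) x) = chain_iter n A x)
    by (intros n A x; exact (colim_lift_in (chain_cocone_colim (Z A)) _ _ _ n x)).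
  assert (Hhn : natural (F := comp T Z) h).
  { intros A B k; apply (colim_fun_ext (chain_cocone_colim (Z A))); intros n x; cbn.
    rewrite <- (chain_cocone_natural n _ _ (fmap Z k) x), !Hh.
    exact (chain_iter_natural n A B k x). }
  exists h; split; [exact Hhn|]; intros A [y|z].
  - exact (Hh 1 A (inl y)).
  - revert z; apply (colim_fun_ext (H_chain_colim_pointwise _ _ chain_cocone_is_colim_end (Z A))).
    intros n v; cbn.
    refine (eq_trans (Hh (S n) A (inr v)) _); cbn.
    rewrite Hmor_Hth_Hmor; auto using init_chain_ocf, chain_cocone_natural; f_equal.
    apply Hmor_ext; intros B x; symmetry; apply Hh.
Qed.

End GeneralizedIteration.

Definition alg_eta : Nt IdF T := fun A y => alpha A (inl y).
Definition alg_r : Nt (H T) T := fun A z => alpha A (inr z).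

Lemma alg_eta_natural : natural alg_eta.
Proof. intros A B k y; exact (alpha_natural A B k (inl y)). Qed.

Lemma alg_r_natural : natural alg_r.
Proof. intros A B k z; exact (alpha_natural A B k (inr z)). Qed.

Lemma fmap_alpha A B (k : A -> B) x :
  fmap T k (alpha A x) = alpha B (fmap (SumF IdF (H T)) k x).
Proof. symmetry; apply alpha_natural. Qed.

Let TT_ocf : ocf (comp T T) := comp_ocf T_ocf T_ocf.
Let T_functor : is_functor T := proj1 T_ocf.

Lemma subst_exists : exists mu, natural mu /\ gen_iter_eq alg_eta (idn T) alg_r mu.
Proof.
  exact (gen_iter_exists T_ocf alg_eta_natural T_ocf (natural_idn T) alg_r_natural).
Qed.

Section Substitution.

Variable mu : Nt (comp T T) T.
Hypothesis mu_natural : natural mu.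
Hypothesis mu_iter : gen_iter_eq alg_eta (idn T) alg_r mu.

Lemma mu_eta_l A x : mu A (alg_eta (T A) x) = x.
Proof. exact (mu_iter A (inl x)). Qed.

Lemma mu_alg_r A w : mu A (alg_r (T A) w) = alg_r A (Hmor H mu A (Hth H T alg_eta A w)).
Proof. exact (mu_iter A (inr w)). Qed.

Lemma mu_eta_r A x : mu A (fmap T (alg_eta A) x) = x.
Proof.
  assert (Hid : gen_iter_eq (idn IdF) alg_eta alg_r (idn T)).
  { intros B [y|z]; [reflexivity|].
    rewrite (Hth_idn T_ocf).
    exact (f_equal (fun k : Nt (H T) (H T) => alg_r B (k B z)) (eq_sym (Hmor_idn T_ocf))). }
  assert (Hmu : gen_iter_eq (idn IdF) alg_eta alg_r (vcomp mu (hcomp (idn T) alg_eta))).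
  { intros B [y|z]; unfold vcomp, hcomp, idn; rewrite fmap_alpha; [apply mu_eta_l|].
    refine (eq_trans (mu_alg_r B _) _); unfold alg_r; do 2 f_equal.
    rewrite (Hth_fmap T_ocf IdF_ocf T_ocf (natural_idn IdF) alg_eta_natural alg_eta_natural)
      by (intros ? ?; reflexivity).
    apply Hmor_vcomp; auto using comp_ocf, IdF_ocf.
    exact (natural_hcomp T_functor (natural_idn T) alg_eta_natural). }
  symmetry; refine (gen_iter_unique IdF_ocf (natural_idn IdF) T_ocf _ _ _ _ Hid Hmu A x).
  - apply natural_idn.
  - exact (natural_vcomp (natural_hcomp T_functor (natural_idn T) alg_eta_natural) mu_natural).
Qed.

Lemma mu_assoc A x : mu A (mu (T A) x) = mu A (fmap T (mu A) x).
Proof.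
  assert (Hee : natural (hcomp alg_eta alg_eta))
    by exact (natural_hcomp T_functor alg_eta_natural alg_eta_natural).
  assert (Hl : gen_iter_eq (hcomp alg_eta alg_eta) mu alg_r (vcomp mu (whiskerR mu T))).
  { intros B [y|z]; unfold vcomp, whiskerR; [exact (f_equal (mu B) (mu_eta_l (T B) y))|].
    refine (eq_trans (f_equal (mu B) (mu_alg_r (T B) z)) (eq_trans (mu_alg_r B _) _)).
    unfold alg_r; do 2 f_equal.
    rewrite (Hth_whiskerR TT_ocf T_ocf T_ocf alg_eta_natural mu_natural).
    rewrite (Hth_hcomp T_ocf T_ocf T_ocf alg_eta_natural alg_eta_natural).
    apply Hmor_vcomp; auto using comp_ocf, natural_whiskerR. }
  assert (Hr : gen_iter_eq (hcomp alg_eta alg_eta) mu alg_r (vcomp mu (hcomp (idn T) mu))).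
  { intros B [y|z]; unfold vcomp, hcomp, idn; rewrite fmap_alpha; [apply mu_eta_l|].
    refine (eq_trans (mu_alg_r B _) _); unfold alg_r; do 2 f_equal.
    rewrite (Hth_fmap T_ocf TT_ocf T_ocf Hee alg_eta_natural mu_natural).
    - apply Hmor_vcomp; auto using comp_ocf.
      exact (natural_hcomp T_functor (natural_idn T) mu_natural).
    - intros C y; unfold vcomp, hcomp; cbn.
      rewrite <- alg_eta_natural; apply mu_eta_l. }
  refine (gen_iter_unique TT_ocf Hee T_ocf _ _ _ _ Hl Hr A x).
  - exact (natural_vcomp (natural_whiskerR mu_natural) mu_natural).
  - exact (natural_vcomp (natural_hcomp T_functor (natural_idn T) mu_natural) mu_natural).
Qed.

Lemma initial_is_representation : is_representation H T alg_eta mu alg_r.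
Proof.
  split; [exact T_ocf|split; [|split]].
  - split; [exact T_functor|].
    exact (conj alg_eta_natural (conj mu_natural (conj mu_eta_l (conj mu_eta_r mu_assoc)))).
  - exact alg_r_natural.
  - intros A w; symmetry; apply mu_alg_r.
Qed.

Section RepresentationMorphism.

Variables (S : Functor) (etaS : Nt IdF S) (muS : Nt (comp S S) S) (s : Nt (H S) S).
Hypothesis S_rep : is_representation H S etaS muS s.

Definition rep_algebra : Nt (SumF IdF (H S)) S :=
  fun A w => match w with inl y => etaS A y | inr z => s A z end.

Lemma rep_algebra_natural : natural rep_algebra.
Proof.
  destruct S_rep as [_ [[_ [HetaS _]] [Hs _]]].
  intros A B k [y|z]; [apply HetaS | apply Hs].
Qed.

Lemma rep_morphism_algebra_morphism (m : Nt T S) :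
  rep_morphism H T S alg_eta mu alg_r etaS muS s m ->
  neq (vcomp m alpha) (vcomp rep_algebra (sum_nat IdF (Hmor H m))).
Proof. intros [[_ [Heta _]] Hr] A [y|z]; [apply Heta | apply Hr]. Qed.

(* Compatibility with substitution holds because both sides are the generalized
   iteration of [m] and [s] along [(T, alg_eta)]. *)
Lemma algebra_morphism_rep_morphism (m : Nt T S) :
  natural m -> neq (vcomp m alpha) (vcomp rep_algebra (sum_nat IdF (Hmor H m))) ->
  rep_morphism H T S alg_eta mu alg_r etaS muS s m.
Proof.
  destruct S_rep as [S_ocf [[S_functor [HetaS [HmuS [HS1 _]]]] [Hs Hsmod]]].
  intros Hmn Hm.
  assert (SS_ocf : ocf (comp S S)) by exact (comp_ocf S_ocf S_ocf).
  assert (Hmeta : neq (vcomp m alg_eta) etaS) by (intros A y; exact (Hm A (inl y))).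
  assert (Hmr : forall A z, m A (alg_r A z) = s A (Hmor H m A z))
    by (intros A z; exact (Hm A (inr z))).
  assert (Hl : gen_iter_eq alg_eta m s (vcomp m mu)).
  { intros A [y|z]; unfold vcomp; [exact (f_equal (m A) (mu_eta_l A y))|].
    refine (eq_trans (f_equal (m A) (mu_alg_r A z)) (eq_trans (Hmr A _) _)).
    f_equal; apply Hmor_vcomp; auto. }
  assert (Hr : gen_iter_eq alg_eta m s (vcomp muS (hcomp m m))).
  { intros A [y|z]; unfold vcomp, hcomp.
    - refine (eq_trans (f_equal (fun w => muS A (fmap S (m A) w)) (Hmeta (T A) y)) _).
      rewrite <- HetaS; apply HS1.
    - refine (eq_trans (f_equal (fun w => muS A (fmap S (m A) w)) (Hmr (T A) z)) _).
      rewrite <- Hs; refine (eq_trans (eq_sym (Hsmod A _)) _).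
      unfold tildeH_action, vcomp; f_equal.
      change (fmap (H S) (m A) (Hmor H m (T A) z)) with (hcomp (Hmor H m) m (A := A) z).
      rewrite (Hth_hcomp_natural T_ocf S_ocf T_ocf S_ocf alg_eta_natural HetaS Hmn Hmn Hmeta).
      apply Hmor_vcomp; auto using natural_hcomp. }
  split; [split; [exact Hmn | split; [exact Hmeta|]] | intros A z; apply Hmr].
  refine (gen_iter_unique T_ocf alg_eta_natural S_ocf _ _ _ _ Hl Hr).
  - exact (natural_vcomp mu_natural Hmn).
  - exact (natural_vcomp (natural_hcomp S_functor Hmn Hmn) HmuS).
Qed.

Lemma initial_rep_morphism_exists : exists m, rep_morphism H T S alg_eta mu alg_r etaS muS s m.
Proof.
  destruct (proj2 (proj2 I) S rep_algebra (proj1 S_rep) rep_algebra_natural) as [m [Hmn [Hm _]]].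
  exists m; exact (algebra_morphism_rep_morphism m Hmn Hm).
Qed.

Lemma initial_rep_morphism_unique (m1 m2 : Nt T S) :
  rep_morphism H T S alg_eta mu alg_r etaS muS s m1 ->
  rep_morphism H T S alg_eta mu alg_r etaS muS s m2 -> neq m1 m2.
Proof.
  intros H1 H2.
  destruct (proj2 (proj2 I) S rep_algebra (proj1 S_rep) rep_algebra_natural) as [m [_ [_ Hu]]].
  intros A x; rewrite (Hu m1 (proj1 (proj1 H1)) (rep_morphism_algebra_morphism m1 H1)).
  symmetry; exact (Hu m2 (proj1 (proj1 H2)) (rep_morphism_algebra_morphism m2 H2) A x).
Qed.

End RepresentationMorphism.

End Substitution.

End InitialAlgebra.

End Arity.

Theorem lemma1 (H : ArityData) (T : Functor) (alpha : Nt (SumF IdF (H T)) T) :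
  strengthened_arity H ->
  initial_algebra H T alpha ->
  ocf T /\
  exists (eta : Nt IdF T) (mu : Nt (comp T T) T) (r : Nt (H T) T),
    is_representation H T eta mu r /\
    forall (S : Functor) (etaS : Nt IdF S) (muS : Nt (comp S S) S)
           (s : Nt (H S) S),
      is_representation H S etaS muS s ->
      (exists m : Nt T S, rep_morphism H T S eta mu r etaS muS s m) /\
      (forall m1 m2 : Nt T S,
         rep_morphism H T S eta mu r etaS muS s m1 ->
         rep_morphism H T S eta mu r etaS muS s m2 -> neq m1 m2).
Proof.
  intros HS I.
  split; [apply I|].
  destruct (subst_exists _ HS _ _ I) as [mu [mu_natural mu_iter]].
  exists (alg_eta _ _ alpha), mu, (alg_r _ _ alpha).
  split; [exact (initial_is_representation _ HS _ _ I _ mu_natural mu_iter)|].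
  intros S etaS muS s S_rep; split.
  - exact (initial_rep_morphism_exists _ HS _ _ I _ mu_natural mu_iter _ _ _ _ S_rep).
  - exact (initial_rep_morphism_unique _ _ _ I mu _ _ _ _ S_rep).
Qed.
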